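(* Let $A_1,\dots,A_p\in M_m$, let $\langle\mathcal{S}\rangle_0$ (resp. $\langle\mathcal{S}\rangle_1$) be the unital (resp. not necessarily unital) subalgebra of $M_m$ generated by $A_1,\dots,A_p$, and let $\tau(X)=\sum_{i=1}^pA_i^*XA_i$ on $M_m$. Let $(a_n)_{n\ge0}$ be strictly positive scalars such that $\sum_{n\ge0}a_n\tau^n$ converges in norm. Then for $j=0,1$ there exists a natural number $N_j\le m^2$ such that the coefficient space of $\sum_{n=j}^{N_j}a_n\tau^n$ equals $\langle\mathcal{S}\rangle_j$, and the Choi rank of $\sum_{n=j}^{N_j}a_n\tau^n$ equals $\dim\langle\mathcal{S}\rangle_j$.
   Context: $\tau^0$ is the identity map. For a completely positive map $\sigma$ on $M_m$ with Choi-Kraus decomposition $\sigma(X)=\sum_kC_k^*XC_k$, the coefficient space of $\sigma$ is $\mathrm{span}\{C_k\}$ (independent of the decomposition) and its dimension is the Choi rank of $\sigma$. *)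

From HB Require Import structures.
From mathcomp Require Import all_boot all_order all_algebra.
From mathcomp Require Import all_classical all_reals all_analysis.
From mathcomp Require Import complex.

Set Implicit Arguments.
Unset Strict Implicit.
Unset Printing Implicit Defensive.

Import Order.TTheory GRing.Theory Num.Theory.
Import numFieldNormedType.Exports.
Local Open Scope ring_scope.

Definition adjmx (R : rcfType) (m : nat) (A : 'M[R[i]]_m) : 'M[R[i]]_m :=
  \matrix_(i, j) (A j i)^*.

Definition tau_map (R : rcfType) (m p : nat) (A : 'I_p -> 'M[R[i]]_m)
  (X : 'M[R[i]]_m) : 'M[R[i]]_m :=
  \sum_(k < p) adjmx (A k) *m X *m A k.

Definition kraus_decomp (R : rcfType) (m : nat)
  (sigma : 'M[R[i]]_m -> 'M[R[i]]_m) (Cs : seq 'M[R[i]]_m) : Prop :=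
  forall X, sigma X = \sum_(C <- Cs) adjmx C *m X *m C.

Definition is_coef_space (R : rcfType) (m : nat)
  (sigma : 'M[R[i]]_m -> 'M[R[i]]_m) (V : {vspace 'M[R[i]]_m}) : Prop :=
  (exists Cs, kraus_decomp sigma Cs) /\
  (forall Cs, kraus_decomp sigma Cs -> <<Cs>>%VS = V).

Definition choi_matrix (R : rcfType) (m : nat)
  (sigma : 'M[R[i]]_m -> 'M[R[i]]_m) :=
  \mxblock_(i < m, j < m) (sigma (delta_mx i j)).

Definition choi_rank (R : rcfType) (m : nat)
  (sigma : 'M[R[i]]_m -> 'M[R[i]]_m) : nat :=
  \rank (choi_matrix sigma).

Definition subalg_closed (R : rcfType) (m p : nat) (j : nat)
  (A : 'I_p -> 'M[R[i]]_m) (W : {vspace 'M[R[i]]_m}) : Prop :=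
  (forall k, A k \in W) /\
  (j = 0%N -> (1%:M : 'M[R[i]]_m) \in W) /\
  (forall X Y, X \in W -> Y \in W -> X *m Y \in W).

Definition is_generated_subalg (R : rcfType) (m p : nat) (j : nat)
  (A : 'I_p -> 'M[R[i]]_m) (V : {vspace 'M[R[i]]_m}) : Prop :=
  subalg_closed j A V /\
  (forall W, subalg_closed j A W -> (V <= W)%VS).

Definition partial_sum (R : rcfType) (m p : nat) (A : 'I_p -> 'M[R[i]]_m)
  (a : nat -> R) (j N : nat) (X : 'M[R[i]]_m) : 'M[R[i]]_m :=
  \sum_(j <= n < N.+1) ((a n)%:C)%C *: iter n (tau_map A) X.

From Pilot Require Import Defs.
From HB Require Import structures.
From mathcomp Require Import all_boot all_order all_algebra.
From mathcomp Require Import all_classical all_reals all_analysis.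
From mathcomp Require Import complex.
From mathcomp Require Import ring zify.

(* The Kraus operators of tau^n are the words of length n in the A_k, so
   sum_{n=j}^N a_n tau^n has the Kraus operators sqrt(a_n) w, for the words w
   of length between j and N; they span the space W_N spanned by these words.
   The W_N increase with N, so by a dimension count W_N = W_(N+1) for some
   N <= m^2; then W_N is stable under right multiplication by the A_k, hence
   a subalgebra, hence the generated one.
   Two Kraus families of the same map span the same space: for a linear
   functional phi, the sum of |phi(E)|^2 over a Kraus family is determined
   by the map, so a phi vanishing on the span of one family vanishes on the
   other. Finally the Choi matrix is G^* G, where the rows of G are the
   vectorised Kraus operators, so its rank is rank G = dim W_N. *)

Set Implicit Arguments.
Unset Strict Implicit.
Unset Printing Implicit Defensive.
Import Order.TTheory GRing.Theory Num.Theory.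
Import VectorInternalTheory.
Import numFieldNormedType.Exports.
Local Open Scope ring_scope.

Section Adjoint.
Variables (R : rcfType) (m : nat).
Local Notation M := 'M[R[i]]_m.

Lemma adjmxM (X Y : M) : adjmx (X *m Y) = adjmx Y *m adjmx X.
Proof.
apply/matrixP => i j; rewrite !mxE rmorph_sum; apply: eq_bigr => k _.
by rewrite !mxE rmorphM mulrC.
Qed.

Lemma adjmx1 : adjmx (1%:M : M) = 1%:M.
Proof. by apply/matrixP => i j; rewrite !mxE rmorph_nat eq_sym. Qed.

Lemma adjmxZ c (X : M) : adjmx (c *: X) = c^* *: adjmx X.
Proof. by apply/matrixP => i j; rewrite !mxE rmorphM. Qed.

Lemma adjmx_delta_mulE (C : M) a b c d :
  (adjmx C *m delta_mx a b *m C) c d = (C a c)^* * C b d.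
Proof.
rewrite -(mul_delta_mx (ord0 : 'I_1)) mulmxA -colE -mulmxA -rowE.
by rewrite !mxE big_ord1 !mxE.
Qed.

End Adjoint.

Section Gram.
Variable C : numClosedFieldType.

Lemma mul_trmx_conj_eq0 n s (W : 'M[C]_(n, s)) :
  W *m (map_mx Num.conj W)^T = 0 -> W = 0.
Proof.
move=> WW0; apply/matrixP => i k.
move: (congr1 (fun X : 'M[C]_n => X i i) WW0); rewrite !mxE => /eqP.
rewrite psumr_eq0 => [|x _]; last by rewrite !mxE mul_conjC_ge0.
move/allP/(_ k (mem_index_enum _)).
by rewrite /= !mxE mul_conjC_eq0 => /eqP ->.
Qed.

Lemma mxrank_conj_trmx_mul n s (G : 'M[C]_(s, n)) :
  \rank ((map_mx Num.conj G)^T *m G) = \rank G.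
Proof.
set Gc := (map_mx Num.conj G)^T.
have rGc : \rank Gc = \rank G by rewrite mxrank_tr mxrank_map.
apply/eqP; rewrite eqn_leq mxrankM_maxr /=.
have kerS : (kermx (Gc *m G) <= kermx Gc)%MS.
  rewrite sub_kermx; apply/eqP/mul_trmx_conj_eq0.
  have GccE : map_mx Num.conj (map_mx Num.conj G) = G.
    by apply/matrixP => i j; rewrite !mxE conjCK.
  rewrite map_mxM trmx_mul /Gc -map_trmx trmxK GccE !mulmxA.
  by rewrite -[kermx _ *m _ *m _]mulmxA mulmx_ker mul0mx.
move: (mxrankS kerS) (rank_leq_row (Gc *m G)) (rank_leq_row Gc).
rewrite !mxrank_ker -rGc; lia.
Qed.

End Gram.

Lemma span_linear_sub (K : fieldType) (vT wT : vectType K)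
    (f : {linear vT -> wT}) (X : seq vT) (U : {vspace wT}) :
  {in X, forall x, f x \in U} -> {in <<X>>%VS, forall v, f v \in U}.
Proof.
move=> fXU v vX; rewrite (coord_span (X := in_tuple X) vX) linear_sum.
by apply: memv_suml => i _; rewrite linearZ memvZ // fXU // mem_nth.
Qed.

Section IncreasingChain.
Variables (K : fieldType) (vT : vectType K) (U : nat -> {vspace vT}).
Hypothesis U_incr : forall n, (U n <= U n.+1)%VS.

Lemma strict_chain_dim n :
  (forall k, (k < n)%N -> U k != U k.+1) -> (n <= \dim (U n))%N.
Proof.
elim: n => [|n IH] Ustrict //.
have dimUS : (\dim (U n) < \dim (U n.+1))%N.
  by rewrite (ltn_leqif (dimv_leqif_eq (U_incr n))) Ustrict.
exact: leq_ltn_trans (IH (fun k lt_kn => Ustrict k (ltnW lt_kn))) dimUS.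
Qed.

Lemma increasing_chain_stable :
  exists2 N, (N <= \dim {:vT})%N & U N = U N.+1.
Proof.
set d := \dim {:vT}.
have [/existsP[k /eqP UkS] | nostable] :=
  boolP [exists k : 'I_d.+1, U k == U k.+1].
  by exists k; rewrite // -ltnS.
have /negP[] : ~~ (d.+1 <= \dim (U d.+1))%N.
  by rewrite -ltnNge ltnS dimvS ?subvf.
apply: strict_chain_dim => k lt_kd; apply: contra nostable => /eqP UkS.
by apply/existsP; exists (Ordinal lt_kd); apply/eqP.
Qed.

End IncreasingChain.

Section KrausDecomposition.
Variables (R : rcfType) (m : nat).
Local Notation M := 'M[R[i]]_m.

Definition mxpair (Y Z : M) : R[i] := \sum_b \sum_d Z b d * Y b d.

Lemma linear_mxE_mxpair (f : {linear M -> M}) r s Z :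
  f Z r s = mxpair (\matrix_(b, d) f (delta_mx b d) r s) Z.
Proof.
rewrite {1}(matrix_sum_delta Z) linear_sum summxE; apply: eq_bigr => b _.
rewrite linear_sum summxE; apply: eq_bigr => d _.
by rewrite linearZ !mxE.
Qed.

Lemma kraus_sum_mxpair_norm (sigma : M -> M) (Es Ds : seq M) Y :
  kraus_decomp sigma Es -> kraus_decomp sigma Ds ->
  \sum_(E <- Es) mxpair Y E * (mxpair Y E)^* =
  \sum_(D <- Ds) mxpair Y D * (mxpair Y D)^*.
Proof.
suff sumE Fs : kraus_decomp sigma Fs ->
    \sum_(F <- Fs) mxpair Y F * (mxpair Y F)^* =
    \sum_b \sum_d \sum_a \sum_c Y b d * (Y a c)^* * sigma (delta_mx a b) c d.
  by move=> /sumE -> /sumE ->.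
move=> sigmaE.
have pairE F : mxpair Y F * (mxpair Y F)^* = \sum_b \sum_d \sum_a \sum_c
    Y b d * (Y a c)^* * ((F a c)^* * F b d).
  rewrite rmorph_sum mulr_suml; apply: eq_bigr => b _.
  rewrite mulr_suml; apply: eq_bigr => d _.
  rewrite mulr_sumr; apply: eq_bigr => a _.
  rewrite rmorph_sum mulr_sumr; apply: eq_bigr => c _.
  by rewrite rmorphM; ring.
rewrite (eq_bigr _ (fun F _ => pairE F)).
rewrite exchange_big; apply: eq_bigr => b _.
rewrite exchange_big; apply: eq_bigr => d _.
rewrite exchange_big; apply: eq_bigr => a _.
rewrite exchange_big; apply: eq_bigr => c _.
rewrite sigmaE summxE mulr_sumr; apply: eq_bigr => F _.
by rewrite adjmx_delta_mulE.
Qed.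

Lemma kraus_span_sub (sigma : M -> M) (Cs Ds : seq M) :
  kraus_decomp sigma Cs -> kraus_decomp sigma Ds -> (<<Cs>> <= <<Ds>>)%VS.
Proof.
move=> sigmaC sigmaD; apply/span_subvP => C0 C0in.
apply/negPn/negP => C0D.
pose g : 'End(M) := (\1 - projv <<Ds>>)%VF.
have gE Z : g Z = Z - projv <<Ds>> Z by rewrite !lfunE /= !lfunE.
have [[r s] /= gC0rs] : exists rs : 'I_m * 'I_m, g C0 rs.1 rs.2 != 0.
  apply/existsP; apply: contraR C0D => /existsPn g0.
  have /eqP : g C0 = 0.
    by apply/matrixP => r s; rewrite mxE; exact/eqP/negPn/(g0 (r, s)).
  by rewrite gE subr_eq0 => /eqP ->; apply: memv_proj.
(* [mxpair Y] is the functional [Z |-> g Z r s]: it vanishes on [Ds] but not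
   at [C0]. *)
pose Y := \matrix_(b, d) g (delta_mx b d) r s.
have gD0 D : D \in Ds -> mxpair Y D = 0.
  move=> DDs; rewrite -(linear_mxE_mxpair g) /= gE.
  by rewrite projv_id ?memv_span ?subrr ?mxE.
have sumD0 : \sum_(D <- Ds) mxpair Y D * (mxpair Y D)^* = 0.
  by rewrite big_seq big1 // => D DDs; rewrite gD0 ?mul0r.
move: (kraus_sum_mxpair_norm Y sigmaC sigmaD); rewrite sumD0 => /eqP.
rewrite psumr_eq0 => [|E _]; last exact: mul_conjC_ge0.
move/allP/(_ C0 C0in); rewrite mul_conjC_eq0 -(linear_mxE_mxpair g).
by rewrite (negPf gC0rs).
Qed.

Lemma coef_space_span (sigma : M -> M) (Cs : seq M) :
  kraus_decomp sigma Cs -> is_coef_space sigma <<Cs>>%VS.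
Proof.
move=> sigmaC; split; first by exists Cs.
move=> Ds sigmaD; apply/eqP.
by rewrite eqEsubv (kraus_span_sub sigmaC sigmaD) (kraus_span_sub sigmaD _).
Qed.

Local Notation mm := (\sum_(i < m) m)%N.

(* Vectorisation along the block indexing of [choi_matrix] (not [mxvec]). *)
Definition blkvec (C : M) : 'rV[R[i]]_mm :=
  \row_k C (tagnat.sig1 k) (tagnat.sig2 k).

Definition unblkvec (v : 'rV[R[i]]_mm) : M :=
  \matrix_(i, c) v 0 (@tagnat.Rank m (fun _ => m) i c).

Lemma blkvecK : cancel blkvec unblkvec.
Proof.
move=> C; apply/matrixP => i c; rewrite !mxE.
have sig2_Rank : tagnat.sig2 (@tagnat.Rank m (fun _ => m) i c) = c.
  by apply: val_inj; rewrite tagnat.Rank2K.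
by rewrite sig2_Rank tagnat.Rank1K.
Qed.

Fact blkvec_is_linear : linear blkvec.
Proof. by move=> c X Y; apply/rowP => k; rewrite !mxE. Qed.
HB.instance Definition _ :=
  GRing.isLinear.Build _ _ _ _ blkvec blkvec_is_linear.

Fact unblkvec_is_linear : linear unblkvec.
Proof. by move=> c X Y; apply/matrixP => i j; rewrite !mxE. Qed.
HB.instance Definition _ :=
  GRing.isLinear.Build _ _ _ _ unblkvec unblkvec_is_linear.

Lemma choi_rank_kraus (sigma : M -> M) (Cs : seq M) :
  kraus_decomp sigma Cs -> choi_rank sigma = \dim <<Cs>>%VS.
Proof.
move=> sigmaC; pose T := in_tuple Cs.
pose G := \matrix_(k < size Cs) blkvec (tnth T k).
have choiE : choi_matrix sigma = (map_mx Num.conj G)^T *m G.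
  apply/matrixP => x y.
  rewrite /choi_matrix /mxblock !mxE sigmaC summxE big_tnth.
  by apply: eq_bigr => k _; rewrite adjmx_delta_mulE !mxE.
rewrite /choi_rank choiE mxrank_conj_trmx_mul.
have -> : \dim <<Cs>>%VS = \rank (b2mx T) by rewrite unlock /dimv genmxE.
have GE : G = b2mx T *m lin1_mx (blkvec \o r2v).
  by apply/row_matrixP => k; rewrite row_mul !rowK mul_rV_lin1 /= v2rK.
have b2mxE : b2mx T = G *m lin1_mx (v2r \o unblkvec).
  by apply/row_matrixP => k; rewrite row_mul !rowK mul_rV_lin1 /= blkvecK.
by apply/eqP; rewrite eqn_leq {1}GE mxrankM_maxl {1}b2mxE mxrankM_maxl.
Qed.

End KrausDecomposition.

Section Words.
Variables (R : rcfType) (m p : nat) (A : 'I_p -> 'M[R[i]]_m).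
Local Notation M := 'M[R[i]]_m.

Fixpoint words (n : nat) : seq M :=
  if n is n'.+1 then [seq W *m A k | W <- words n', k <- index_enum 'I_p]
  else [:: 1%:M].

Lemma iter_tau_words n X :
  iter n (tau_map A) X = \sum_(W <- words n) adjmx W *m X *m W.
Proof.
elim: n => [|n IH]; first by rewrite /= big_seq1 adjmx1 mul1mx mulmx1.
rewrite iterS IH /= big_allpairs_dep /tau_map exchange_big /=.
apply: eq_bigr => k _; rewrite mulmx_sumr mulmx_suml; apply: eq_bigr => W _.
by rewrite !adjmxM !mulmxA.
Qed.

Definition words_between (j N : nat) : seq M :=
  flatten [seq words n | n <- index_iota j N.+1].

Lemma words_between_subS j N :
  (<<words_between j N>> <= <<words_between j N.+1>>)%VS.
Proof.
apply: sub_span => W /flatten_mapP [n nin Win]; apply/flatten_mapP.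
by exists n => //; move: nin; rewrite !mem_index_iota; lia.
Qed.

Lemma words_in_subalg j (V : {vspace M}) n W :
  (j <= 1)%N -> Defs.subalg_closed j A V -> (j <= n)%N -> W \in words n ->
  W \in V.
Proof.
move=> le_j1 [AV [oneV mulV]]; elim: n W => [|n IH] W le_jn.
  by rewrite inE => /eqP ->; apply: oneV; lia.
case/allpairsP => [[W' k] [/= W'in _ ->]].
have [le_jn' | lt_nj] := leqP j n.
  by apply: mulV; [apply: IH | apply: AV].
have n0 : n = 0%N by lia.
by move: W'in; rewrite n0 inE => /eqP ->; rewrite mul1mx AV.
Qed.

Lemma stable_words_subalg_closed j N :
  (j <= 1)%N -> <<words_between j N>>%VS = <<words_between j N.+1>>%VS ->
  Defs.subalg_closed j A <<words_between j N>>%VS.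
Proof.
move=> le_j1 stable.
have mulA X k : X \in <<words_between j N>>%VS ->
    X *m A k \in <<words_between j N>>%VS.
  apply: (span_linear_sub (f := mulmxr (A k))) => W /flatten_mapP [n nin Win].
  rewrite /= stable memv_span //; apply/flatten_mapP; exists n.+1.
    by move: nin; rewrite !mem_index_iota; lia.
  by apply/allpairsP; exists (W, k); rewrite mem_index_enum.
have mulW X n W : W \in words n -> X \in <<words_between j N>>%VS ->
    X *m W \in <<words_between j N>>%VS.
  elim: n W => [|n IH] W; first by rewrite inE => /eqP -> XU; rewrite mulmx1.
  by case/allpairsP => [[W' k] [/= W'in _ ->]] XU; rewrite mulmxA mulA ?IH.
split; [move=> k | split; [move=> j0 | move=> X Y XU]].
- rewrite stable memv_span //; apply/flatten_mapP; exists 1%N.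
    by rewrite mem_index_iota le_j1.
  by apply/allpairsP; exists (1%:M, k); rewrite mem_index_enum mem_head mul1mx.
- rewrite memv_span //; apply/flatten_mapP; exists 0%N; last exact: mem_head.
  by rewrite mem_index_iota j0.
- apply: (span_linear_sub (f := mulmx X)) => W /flatten_mapP [n _ Win].
  exact: mulW Win XU.
Qed.

Lemma generated_subalg_words j N (V : {vspace M}) :
  (j <= 1)%N -> is_generated_subalg j A V ->
  <<words_between j N>>%VS = <<words_between j N.+1>>%VS ->
  V = <<words_between j N>>%VS.
Proof.
move=> le_j1 [Vclosed Vmin] stable; apply/eqP; rewrite eqEsubv.
rewrite Vmin /=; last exact: stable_words_subalg_closed.
apply/span_subvP => W /flatten_mapP [n nin Win].
move: nin; rewrite mem_index_iota => /andP [le_jn _].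
exact: words_in_subalg le_j1 Vclosed le_jn Win.
Qed.

Variable a : nat -> R.
Hypothesis a_gt0 : forall n, 0 < a n.

Definition sqrt_coef n : R[i] := (Num.sqrt (a n))%:C%C.

Definition kraus_partial_sum j N : seq M :=
  flatten [seq [seq sqrt_coef n *: W | W <- words n] | n <- index_iota j N.+1].

Lemma kraus_decomp_partial_sum j N :
  kraus_decomp (partial_sum A a j N) (kraus_partial_sum j N).
Proof.
move=> X; rewrite /partial_sum /kraus_partial_sum big_flatten big_map /=.
apply: eq_bigr => n _; rewrite iter_tau_words scaler_sumr big_map.
apply: eq_bigr => W _; rewrite adjmxZ -!scalemxAl -scalemxAr scalerA.
rewrite conj_Creal ?complex_real // -rmorphM -expr2 sqr_sqrtr //.
exact: ltW.
Qed.

Lemma span_kraus_partial_sum j N :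
  <<kraus_partial_sum j N>>%VS = <<words_between j N>>%VS.
Proof.
have sqrt_coef_neq0 n : sqrt_coef n != 0.
  by rewrite fmorph_eq0 sqrtr_eq0 -ltNge a_gt0.
apply/eqP; rewrite eqEsubv; apply/andP; split; apply/span_subvP => W.
  move/flatten_mapP => [n nin /mapP [W' W'in ->]].
  by rewrite memvZ // memv_span //; apply/flatten_mapP; exists n.
move/flatten_mapP => [n nin Win].
rewrite -[W](scalerK (sqrt_coef_neq0 n)) memvZ // memv_span //.
by apply/flatten_mapP; exists n; rewrite // map_f.
Qed.

End Words.

Theorem theorem5p5 (R : realType) (m p : nat) (A : 'I_p -> 'M[R[i]]_m)
  (a : nat -> R) :
  (forall n, 0 < a n) ->
  (* norm convergence of \sum_n a_n tau^n, i.e. (finite dimension)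
     entrywise convergence of the real and imaginary parts of
     \sum_n a_n tau^n(X) for every X *)
  (forall (X : 'M[R[i]]_m) (r s : 'I_m),
      cvgn (series (fun n => a n * complex.Re (iter n (tau_map A) X r s))) /\
      cvgn (series (fun n => a n * complex.Im (iter n (tau_map A) X r s)))) ->
  forall (j : nat), (j <= 1)%N ->
  forall V : {vspace 'M[R[i]]_m}, is_generated_subalg j A V ->
  exists N : nat, (N <= m ^ 2)%N /\
    is_coef_space (partial_sum A a j N) V /\
    choi_rank (partial_sum A a j N) = \dim V.
Proof.
move=> a_gt0 _ j le_j1 V genV.
have [N le_N_dim stable] := increasing_chain_stable (words_between_subS A j).
have VE := generated_subalg_words le_j1 genV stable.
have krausN := kraus_decomp_partial_sum A a_gt0 j N.
exists N; split; first by move: le_N_dim; rewrite dimvf dim_matrix -mulnn.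
rewrite VE -(span_kraus_partial_sum A a_gt0).
by split; [exact: coef_space_span krausN | exact: choi_rank_kraus krausN].
Qed.
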